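(* Let $p$ be a prime with $p\notin\{2,3,7,43\}$, and let $n$ be a positive integer divisible by $p$. Then $n\in\mathcal{M}_p^{(1)}$ if and only if $n/p\in\mathcal{W}$, $\mathfrak{n}_{n/p}\mid p$, and $\mathfrak{n}_{n/p}-1\nmid n/p$.
   Context: For positive integers $k,n$ let $S_k(n)=\sum_{i=1}^{n} i^k$. For an integer $a$, $\mathcal{M}_a$ denotes the set of positive integers $n$ such that $S_n(n)\equiv a\pmod{n}$. For a prime $p$, $\mathcal{M}_p^{(1)}=\{n\in\mathcal{M}_p : p\mid n,\ p^2\nmid n\}$. A positive integer $n$ is a weak primary pseudoperfect number if $\sum_{q\mid n,\ q\text{ prime}} \frac{n}{q}+1\equiv 0\pmod{n}$; $\mathcal{W}$ denotes the set of such numbers. For a positive integer $Q$, $\mathfrak{n}_Q=\operatorname{lcm}\{(q-1)/\gcd(q-1,Q) : q\text{ prime},\ q\mid Q\}$ if $Q\neq 1$, and $\mathfrak{n}_1=1$. *)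

From mathcomp Require Import all_boot.
Set Implicit Arguments. Unset Strict Implicit. Unset Printing Implicit Defensive.

Definition S (k n : nat) : nat := \sum_(1 <= i < n.+1) i ^ k.

(* n \in M_a  (a nonnegative here; only a = p is used) *)
Definition inM (a n : nat) : Prop := 0 < n /\ S n n = a %[mod n].

Definition inM1 (p n : nat) : Prop := inM p n /\ p %| n /\ ~~ (p ^ 2 %| n).

Definition inW (n : nat) : Prop :=
  0 < n /\ (\sum_(q <- primes n) n %/ q) + 1 = 0 %[mod n].

Definition frakn (Q : nat) : nat :=
  if Q == 1 then 1
  else \big[lcmn/1]_(q <- primes Q) ((q - 1) %/ gcdn (q - 1) Q).

From mathcomp Require Import all_boot ssralg finalg zmodp fingroup cyclic.
Set Implicit Arguments. Unset Strict Implicit. Unset Printing Implicit Defensive.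

(* Let q ^ e be the exact power of a prime q dividing n.  Summing i ^ n over a full
   period mod q ^ e gives 0 when q - 1 does not divide n (multiply by a residue a with
   a ^ n <> 1 mod q), and -q ^ (e - 1) otherwise (Euler's theorem), so that
   S_n(n) = - sum_{q | n, q - 1 | n} n / q  (mod n).
   For n = pQ with p not dividing Q this turns S_n(n) = p (mod n) into: p - 1 does not
   divide n and Q divides 1 + sum_{q | Q, q - 1 | n} Q / q.  The latter forces q - 1 | pQ
   for every prime q | Q (a missing term would leave a sum divisible by q), i.e.
   n_Q | p, and then says that Q is weak primary pseudoperfect.  Conversely, the only
   obstruction is n_Q = 1, where every q - 1 divides the squarefree Q; such Q are the
   products 1, 2, 6, 42, 1806 of initial Sylvester numbers, whence the excluded primes. *)

Lemma exists_expn_modn_neq1 q k : prime q -> ~~ (q.-1 %| k) ->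
  exists2 a, coprime a q & a ^ k %% q != 1.
Proof.
case: q => [|[|q']] // q_pr q_k.
have /cyclicP [x def_units] := units_Zp_cyclic q_pr.
have ox : #[x]%g = q'.+1 by rewrite /order -def_units card_units_Zp // totient_prime.
exists (val (val x)).
  by have := valP x; rewrite /= -[X in X \is a _]natr_Zp unitZpE // coprime_sym.
apply: contra q_k => /eqP xk1; rewrite /= -ox order_dvdn.
by apply/eqP/val_inj/val_inj; rewrite unit_Zp_expg /= xk1.
Qed.

Lemma eqn_modMl_coprime m a i j :
  coprime a m -> (a * i == a * j %[mod m]) = (i == j %[mod m]).
Proof.
move=> co_am; wlog le_ij : i j / i <= j.
  by move=> IH; case: (leqP i j) => [|/ltnW] /IH; rewrite // eq_sym => ->; rewrite eq_sym.
rewrite eq_sym [RHS]eq_sym !eqn_mod_dvd ?leq_mul2l ?le_ij ?orbT //.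
by rewrite -mulnBr Gauss_dvdr // coprime_sym.
Qed.

Lemma sum_expn_mulr_modn m a k : 0 < m -> coprime a m ->
  \sum_(i < m) ((a * i) %% m) ^ k = \sum_(i < m) i ^ k.
Proof.
move=> m_gt0 co_am; pose h (i : 'I_m) : 'I_m := Ordinal (ltn_pmod (a * i) m_gt0).
have h_inj : injective h.
  move=> i j /(congr1 val) /eqP; rewrite /= eqn_modMl_coprime // !modn_small //.
  by move=> /eqP; apply: val_inj.
by rewrite [RHS](reindex_inj h_inj).
Qed.

Lemma pfactor_dvdn_sum_expn q e k : prime q -> ~~ (q.-1 %| k) ->
  q ^ e %| \sum_(i < q ^ e) i ^ k.
Proof.
move=> q_pr q_k; have [a co_aq ak_neq1] := exists_expn_modn_neq1 q_pr q_k.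
set m := q ^ e; set U := \sum_(i < m) i ^ k.
have m_gt0 : 0 < m by rewrite expn_gt0 prime_gt0.
have co_am : coprime a m by rewrite coprimeXr.
have ak_gt0 : 0 < a ^ k.
  rewrite expn_gt0; case: a co_aq {ak_neq1 co_am} => // /eqP.
  by rewrite gcd0n => q1; rewrite q1 in q_pr.
(* multiplication by [a] permutes the residues, so [U] is fixed by [a ^ k] *)
have aU : a ^ k * U = U %[mod m].
  rewrite /U -[in RHS](sum_expn_mulr_modn k m_gt0 co_am) big_distrr /=.
  rewrite -modn_summ -[RHS]modn_summ; congr (_ %% _).
  by apply: eq_bigr => i _; rewrite modnXm expnMn.
have co_m : coprime m (a ^ k - 1).
  rewrite coprimeXl // prime_coprime // -eqn_mod_dvd //.
  by rewrite [1 %% q]modn_small ?prime_gt1.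
rewrite -(Gauss_dvdr _ co_m) mulnBl mul1n -eqn_mod_dvd ?aU //.
by rewrite leq_pmull.
Qed.

Lemma pfactor_dvdn_sum_expn_totient q e k : prime q -> 0 < e -> e <= k ->
  totient (q ^ e) %| k -> q ^ e %| \sum_(i < q ^ e) i ^ k + q ^ e.-1.
Proof.
move=> q_pr e_gt0 le_ek tot_k; set m := q ^ e.
have q_gt0 := prime_gt0 q_pr.
(* Euler's theorem on the units, and [q ^ e %| i ^ k] on the rest *)
have sum_coprime : \sum_(i < m) i ^ k = \sum_(i < m) coprime m i %[mod m].
  rewrite -modn_summ -[RHS]modn_summ; congr (_ %% _); apply: eq_bigr => i _.
  have [co_mi | /negbTE] := boolP (coprime m i).
    move/dvdnP: tot_k => [c ->]; rewrite mulnC expnM -modnXm.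
    rewrite Euler_exp_totient 1?coprime_sym // modnXm exp1n.
    by rewrite modn_small // /m -(expn0 q) ltn_exp2l ?prime_gt1.
  rewrite /m coprime_pexpl // prime_coprime // => /negbFE /dvdnP [c ->].
  rewrite mod0n; apply/eqP; rewrite expnMn; apply: dvdn_mull.
  exact: dvdn_exp2l.
have tot_m : totient m = \sum_(i < m) coprime m i.
  by rewrite totient_count_coprime big_mkord.
rewrite /dvdn -modnDml sum_coprime modnDml -tot_m totient_pfactor //.
by rewrite -{2}(mul1n (q ^ e.-1)) -mulnDl addn1 prednK // -expnS prednK // modnn.
Qed.

Lemma sum_expn_period m c k :
  \sum_(0 <= i < m * c) i ^ k = c * \sum_(i < m) i ^ k %[mod m].
Proof.
rewrite -(big_mkord xpredT (fun i => i ^ k)).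
elim: c => [|c IH]; first by rewrite muln0 big_geq.
rewrite mulnS addnC (@big_cat_nat _ _ _ (m * c)) ?leq_addr //=.
rewrite -{2}[m * c]add0n big_addn addKn mulSnr -modnDml IH modnDml.
apply/eqP; rewrite eqn_modDl; apply/eqP.
rewrite -modn_summ -[RHS]modn_summ; congr (_ %% _); apply: eq_bigr => i _.
by rewrite -modnXm (addnC i) (mulnC m) modnMDl modnXm.
Qed.

Lemma S_modn_divisor k n m : 0 < k -> m %| n ->
  S k n = n %/ m * \sum_(i < m) i ^ k %[mod m].
Proof.
move=> k_gt0 m_n.
have -> : S k n = \sum_(0 <= i < n) i ^ k + n ^ k.
  by rewrite -big_nat_recr // big_ltn // exp0n.
rewrite -modnDmr (eqP (dvdn_exp k_gt0 m_n)) addn0.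
by rewrite -{1}(divnK m_n) mulnC sum_expn_period.
Qed.

Definition cofactor_sum k n := \sum_(q <- primes n | q.-1 %| k) n %/ q.

Lemma prime_dvdn_cofactor Q r s : r \in primes Q -> s \in primes Q -> s != r ->
  r %| Q %/ s.
Proof.
rewrite !mem_primes => /and3P [r_pr _ r_Q] /and3P [s_pr _ s_Q] s_neq_r.
have co_rs : coprime r s by rewrite prime_coprime // dvdn_prime2 // eq_sym.
by rewrite -(Gauss_dvdr _ co_rs) mulnC divnK.
Qed.

Lemma dvdn_S_cofactor_sum k n : 0 < k -> n %| k -> n %| S k n + cofactor_sum k n.
Proof.
move=> k_gt0 n_k; have n_gt0 := dvdn_gt0 k_gt0 n_k.
apply/dvdn_partP => // q q_n; rewrite p_part.
have q_pr : prime q by move: q_n; rewrite mem_primes => /andP [].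
set e := logn q n; set m := q ^ e.
have e_gt0 : 0 < e by rewrite logn_gt0.
have m_n : m %| n by apply: pfactor_dvdnn.
have m_gt0 : 0 < m by rewrite expn_gt0 prime_gt0.
have le_ek : e <= k.
  apply/ltnW/(leq_trans (ltn_expl e (prime_gt1 q_pr)))/dvdn_leq => //.
  exact: dvdn_trans m_n n_k.
have others : m %| \sum_(r <- primes n | r != q) (if r.-1 %| k then n %/ r else 0).
  rewrite big_seq_cond; apply: dvdn_sum => r /andP [r_n r_neq_q]; case: ifP => // _.
  move: r_n; rewrite mem_primes => /and3P [r_pr _ r_dvd_n].
  have co_mr : coprime m r.
    by rewrite coprimeXl // prime_coprime // dvdn_prime2 // eq_sym.
  by rewrite -(Gauss_dvdr _ co_mr) mulnC divnK.
rewrite /cofactor_sum big_mkcond (bigD1_seq q) ?primes_uniq //= addnA.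
apply: dvdn_add => //; rewrite /dvdn -modnDml S_modn_divisor // modnDml -/(dvdn _ _).
set c := n %/ m; have def_n : n = m * c by rewrite /c mulnC divnK.
case: ifPn => q1_k; last by rewrite addn0 dvdn_mull ?pfactor_dvdn_sum_expn.
have -> : n %/ q = q ^ e.-1 * c.
  by rewrite def_n /m -(prednK e_gt0) expnS -mulnA mulKn ?prime_gt0.
rewrite [q ^ _ * c]mulnC -mulnDr dvdn_mull // pfactor_dvdn_sum_expn_totient //.
rewrite totient_pfactor // Gauss_dvd; last by rewrite coprimeXr // coprimePn ?prime_gt0.
rewrite [_ %| k]q1_k; apply: dvdn_trans n_k; apply: dvdn_trans m_n.
exact: dvdn_exp2l (leq_pred e).
Qed.

Lemma S_diag_modn n a : 0 < n -> (S n n == a %[mod n]) = (n %| cofactor_sum n n + a).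
Proof.
move=> n_gt0; have /eqP S_T := dvdn_S_cofactor_sum n_gt0 (dvdnn n).
by rewrite -(eqn_modDr (cofactor_sum n n)) S_T eq_sym addnC.
Qed.

Lemma cofactor_sum_pmul k p Q : prime p -> 0 < Q -> ~~ (p %| Q) ->
  cofactor_sum k (p * Q) = (if p.-1 %| k then Q else 0) + p * cofactor_sum k Q.
Proof.
move=> p_pr Q_gt0 p_Q; have p_gt0 := prime_gt0 p_pr.
have pQ_gt0 : 0 < p * Q by rewrite muln_gt0 p_gt0.
have p_pQ : p \in primes (p * Q) by rewrite mem_primes p_pr pQ_gt0 dvdn_mulr.
rewrite /cofactor_sum big_mkcond (bigD1_seq p) ?primes_uniq //= mulKn //.
congr (_ + _); rewrite -big_filter big_distrr /= -big_mkcondr.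
rewrite (perm_big (primes Q)) /=; last first.
  apply: uniq_perm; rewrite ?filter_uniq ?primes_uniq // => r.
  rewrite mem_filter primesM // primes_prime // inE.
  by case: eqVneq => [->|] //=; rewrite mem_primes (negbTE p_Q) !andbF.
rewrite big_seq_cond [RHS]big_seq_cond; apply: eq_bigr => r /andP [].
rewrite mem_primes => /and3P [_ _ r_Q] _.
by rewrite muln_divA.
Qed.

Lemma dvdn_cofactor_sumS_primes (P : pred nat) Q r :
  Q %| \sum_(s <- primes Q | P s) Q %/ s + 1 -> r \in primes Q ->
  P r && ~~ (r ^ 2 %| Q).
Proof.
move=> Q_sum r_Q; move: (r_Q); rewrite mem_primes => /and3P [r_pr _ r_dvd_Q].
(* otherwise every term of the sum is a multiple of [r], which divides the sum plus one *)
apply/negPn/negP; rewrite negb_and negbK => bad_r.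
have r_sum : r %| \sum_(s <- primes Q | P s) Q %/ s.
  rewrite big_mkcond (bigD1_seq r) ?primes_uniq //=; apply: dvdn_add.
    by case: ifPn bad_r => //= _ r2_Q; rewrite dvdn_divRL // mulnn.
  rewrite big_seq_cond; apply: dvdn_sum => s /andP [s_Q s_neq_r].
  by case: ifP => // _; apply: prime_dvdn_cofactor.
have := dvdn_trans r_dvd_Q Q_sum; rewrite dvdn_addr // dvdn1 => /eqP r1.
by rewrite r1 in r_pr.
Qed.

Lemma cofactor_sum_full k Q : {in primes Q, forall r, r.-1 %| k} ->
  cofactor_sum k Q = \sum_(r <- primes Q) Q %/ r.
Proof.
move=> primes_k; rewrite /cofactor_sum big_seq_cond [RHS]big_seq.
by apply: eq_bigl => r; rewrite andb_idr //; apply: primes_k.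
Qed.

Lemma dvdn_biglcm_seqP (s : seq nat) (F : nat -> nat) d :
  reflect {in s, forall x, F x %| d} (\big[lcmn/1]_(x <- s) F x %| d).
Proof.
elim: s => [|x s IH].
  by rewrite big_nil dvd1n; apply: ReflectT => y; rewrite in_nil.
rewrite big_cons dvdn_lcm; apply: (iffP andP) => [[Fx /IH Fs] y | Fxs].
  by rewrite inE => /predU1P [->|y_s]; last exact: Fs y y_s.
split; first exact: Fxs x (mem_head x s).
by apply/IH => y y_s; apply: (Fxs y); rewrite inE y_s orbT.
Qed.

Lemma dvdn_divn_gcdn a d Q : 0 < Q -> (a %/ gcdn a Q %| d) = (a %| d * Q).
Proof.
move=> Q_gt0; have g_gt0 : 0 < gcdn a Q by rewrite gcdn_gt0 Q_gt0 orbT.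
by rewrite -(dvdn_pmul2r g_gt0) divnK ?dvdn_gcdl // muln_gcdr dvdn_gcd dvdn_mull.
Qed.

Lemma frakn_dvdnP Q d : 0 < Q ->
  reflect {in primes Q, forall r, r.-1 %| d * Q} (frakn Q %| d).
Proof.
move=> Q_gt0.
have -> : frakn Q = \big[lcmn/1]_(r <- primes Q) ((r - 1) %/ gcdn (r - 1) Q).
  by rewrite /frakn; case: eqP => // ->; rewrite big_nil.
apply: (iffP (dvdn_biglcm_seqP _ _ _)) => primes_d r /primes_d.
  by rewrite dvdn_divn_gcdn // subn1.
by rewrite dvdn_divn_gcdn // subn1.
Qed.

Definition sylvester_products := [:: 1; 2; 6; 42; 1806].

Lemma sylvester_products_gt0 Q : Q \in sylvester_products -> 0 < Q.
Proof. by apply: (allP (_ : all (leq 1) sylvester_products)). Qed.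

Lemma sylvester_products_primes Q q : Q \in sylvester_products -> prime q ->
  (q.-1 %| Q) || (q %| Q) -> q \in [:: 2; 3; 7; 43].
Proof.
move=> Q_syl q_pr q_Q; have Q_gt0 := sylvester_products_gt0 Q_syl.
have le_qQ : q < Q.+2.
  case/orP: q_Q => [q1_Q | /(dvdn_leq Q_gt0) le_qQ]; last by rewrite ltnS leqW.
  by rewrite -(prednK (prime_gt0 q_pr)) !ltnS dvdn_leq.
have: all (fun Q => all (fun q => ((q.-1 %| Q) || (q %| Q)) && prime q ==>
  (q \in [:: 2; 3; 7; 43])) (iota 0 Q.+2)) sylvester_products by vm_compute.
move=> /allP /(_ Q Q_syl) /allP /(_ q); rewrite mem_iota le_qQ q_pr q_Q.
by apply.
Qed.

Lemma sylvester_products_mul Q q : Q \in sylvester_products -> prime q ->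
  q.-1 %| Q -> ~~ (q %| Q) -> Q * q \in sylvester_products.
Proof.
move=> Q_syl q_pr q1_Q q_Q.
have q_syl : q \in [:: 2; 3; 7; 43].
  by apply: (sylvester_products_primes Q_syl q_pr); rewrite q1_Q.
have: all (fun Q => all (fun q => (q.-1 %| Q) && ~~ (q %| Q) ==>
  (Q * q \in sylvester_products)) [:: 2; 3; 7; 43]) sylvester_products by [].
by move=> /allP /(_ Q Q_syl) /allP /(_ q q_syl); rewrite q1_Q q_Q; apply.
Qed.

Lemma mem_sylvester_products Q : 0 < Q ->
  {in primes Q, forall r, r.-1 %| Q /\ ~~ (r ^ 2 %| Q)} -> Q \in sylvester_products.
Proof.
elim/ltn_ind: Q => Q IH Q_gt0 primes_Q.
have [Q_gt1 | ] := ltnP 1 Q; last by case: Q Q_gt0 {IH primes_Q} => [|[]].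
(* strip off the largest prime factor [q]: the [r - 1] with [r <= q] are coprime to [q] *)
set q := max_pdiv Q; have q_pr : prime q by apply: max_pdiv_prime.
have q_Q : q \in primes Q by rewrite mem_primes q_pr Q_gt0 max_pdiv_dvd.
set Q' := Q %/ q; have def_Q : Q = Q' * q by rewrite /Q' divnK ?max_pdiv_dvd.
have Q'_gt0 : 0 < Q' by rewrite /Q' divn_gt0 ?prime_gt0 // dvdn_leq ?max_pdiv_dvd.
have q_Q' : ~~ (q %| Q').
  by apply: contra (proj2 (primes_Q q q_Q)); rewrite def_Q -mulnn dvdn_pmul2r ?prime_gt0.
have primes_Q' r : r \in primes Q -> r.-1 %| Q'.
  move=> r_Q; have [r1_Q _] := primes_Q r r_Q.
  have r_pr : prime r by move: r_Q; rewrite mem_primes => /andP [].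
  have co_r1q : coprime r.-1 q.
    rewrite coprime_sym prime_coprime //; apply: contraL (max_pdiv_max r_Q) => q_r1.
    rewrite -ltnNge -(prednK (prime_gt0 r_pr)) ltnS dvdn_leq //.
    by rewrite -ltnS prednK ?prime_gt0 ?prime_gt1.
  by rewrite -(Gauss_dvdl _ co_r1q) -def_Q.
have primes_Q'_Q r : r \in primes Q' -> r \in primes Q.
  by rewrite def_Q primesM // ?prime_gt0 // => ->.
rewrite def_Q sylvester_products_mul ?primes_Q' //.
apply: IH => // [|r /primes_Q'_Q r_Q]; first by rewrite /Q' ltn_Pdiv ?prime_gt1.
split; first exact: primes_Q'.
apply: contra (proj2 (primes_Q r r_Q)) => /dvdn_trans; apply.
by rewrite def_Q dvdn_mulr.
Qed.

Lemma dvdn_cofactor_sum_pmul p Q : prime p -> 0 < Q -> ~~ (p %| Q) ->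
  (p * Q %| cofactor_sum (p * Q) (p * Q) + p) =
  ~~ (p.-1 %| Q) && (Q %| cofactor_sum (p * Q) Q + 1).
Proof.
move=> p_pr Q_gt0 p_Q; have p_gt0 := prime_gt0 p_pr.
rewrite cofactor_sum_pmul // Gauss_dvdr ?coprimePn //.
case: ifPn => _; last by rewrite add0n -mulnSr dvdn_pmul2l // addn1.
apply/negbTE; apply: contra p_Q => /(dvdn_trans (dvdn_mulr Q (dvdnn p))).
by rewrite -addnA -mulnSr dvdn_addl ?dvdn_mulr.
Qed.

Lemma inM1_pmul p Q : prime p -> 0 < Q ->
  inM1 p (p * Q) <->
  [/\ ~~ (p %| Q), ~~ (p.-1 %| Q) & Q %| cofactor_sum (p * Q) Q + 1].
Proof.
move=> p_pr Q_gt0; have pQ_gt0 : 0 < p * Q by rewrite muln_gt0 prime_gt0.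
rewrite /inM1 /inM dvdn_mulr // expnS expn1 (dvdn_pmul2l (prime_gt0 p_pr)).
split=> [[[_ /eqP S_p] [_ p_Q]] | [p_Q p1_Q Q_sum]].
  move: S_p; rewrite S_diag_modn // (dvdn_cofactor_sum_pmul p_pr Q_gt0 p_Q).
  by case/andP.
do !split=> //; apply/eqP.
by rewrite S_diag_modn // (dvdn_cofactor_sum_pmul p_pr Q_gt0 p_Q) p1_Q Q_sum.
Qed.

Lemma inWP Q : 0 < Q -> inW Q <-> Q %| \sum_(q <- primes Q) Q %/ q + 1.
Proof. by move=> Q_gt0; rewrite /inW mod0n; split=> [[_ /eqP] | /eqP]. Qed.

Lemma cofactor_conditions_frakn p Q :
  prime p -> p \notin [:: 2; 3; 7; 43] -> 0 < Q ->
  [/\ ~~ (p %| Q), ~~ (p.-1 %| Q) & Q %| cofactor_sum (p * Q) Q + 1] <->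
  [/\ inW Q, frakn Q %| p & ~~ ((frakn Q - 1) %| Q)].
Proof.
move=> p_pr p_syl Q_gt0.
split=> [[p_Q p1_Q Q_sum] | [/(inWP Q_gt0) Q_sum frakn_p frakn1_Q]].
  have primes_Q : {in primes Q, forall r, r.-1 %| p * Q}.
    by move=> r /(dvdn_cofactor_sumS_primes Q_sum) /andP [].
  have frakn_p : frakn Q %| p by apply/frakn_dvdnP.
  split=> //; first by apply/inWP; rewrite // -(cofactor_sum_full primes_Q).
  case/primeP: p_pr => _ /(_ _ frakn_p) /pred2P [-> | ->].
    by rewrite subnn dvd0n -lt0n.
  by rewrite subn1.
have primes_Q : {in primes Q, forall r, r.-1 %| p * Q} by apply/frakn_dvdnP.
have p1_Q : ~~ (p.-1 %| Q).
  case/primeP: (p_pr) => _ /(_ _ frakn_p) /pred2P [frakn1 | fraknp]; last first.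
    by rewrite fraknp subn1 in frakn1_Q.
  have /(frakn_dvdnP _ Q_gt0) primes_Q1 : frakn Q %| 1 by rewrite frakn1.
  have Q_syl : Q \in sylvester_products.
    apply: mem_sylvester_products => // r r_Q; split.
      by rewrite -[Q]mul1n primes_Q1.
    by have /andP [] := dvdn_cofactor_sumS_primes (P := fun _ => true) Q_sum r_Q.
  apply: contra p_syl => p1_Q.
  by apply: (sylvester_products_primes Q_syl p_pr); rewrite p1_Q.
have p_Q : ~~ (p %| Q).
  apply: contra p1_Q => p_Q; rewrite -(Gauss_dvdr _ (coprimePn (prime_gt0 p_pr))).
  by rewrite primes_Q // mem_primes p_pr Q_gt0 p_Q.
by split=> //; rewrite cofactor_sum_full.
Qed.

Theorem mainTheorem18 (p n : nat) :
  prime p -> p \notin [:: 2; 3; 7; 43] -> 0 < n -> p %| n ->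
  (inM1 p n <->
   [/\ inW (n %/ p), frakn (n %/ p) %| p & ~~ ((frakn (n %/ p) - 1) %| n %/ p)]).
Proof.
move=> p_pr p_syl n_gt0 /dvdnP [Q def_n].
have Q_gt0 : 0 < Q by move: n_gt0; rewrite def_n muln_gt0 => /andP [].
rewrite def_n mulnK ?prime_gt0 // mulnC.
exact: iff_trans (inM1_pmul p_pr Q_gt0) (cofactor_conditions_frakn p_pr p_syl Q_gt0).
Qed.
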